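(* Let $(\mathcal R,\Sigma,\Delta)$ be a right triangulated category with right semi-equivalence and let $(\mathcal U,\mathcal V)$ be a torsion pair in $\mathcal R$. The following are equivalent: (a) $\Sigma\mathcal U\subseteq\mathcal U$; (b) $\Sigma^{-1}\mathcal V\subseteq\mathcal V$, where $\Sigma^{-1}\mathcal V=\{X\in\mathcal R:\Sigma X\in\mathcal V\}$; (c) $\mathcal R(\Sigma\mathcal U,\mathcal V)=0$; (d) $\Sigma$ maps $\mathcal V$-monic morphisms to $\mathcal V$-monic morphisms.
   Context: All categories are additive and idempotent complete. A right triangulated category $(\mathcal R,\Sigma,\Delta)$: additive category, additive endofunctor $\Sigma$, class $\Delta$ of right triangles $A\to B\to C\to\Sigma A$ satisfying the axioms of a triangulated category except that $\Sigma$ need not be an equivalence and only rotation to the right ($B\xrightarrow{y}C\xrightarrow{z}\Sigma A\xrightarrow{-\Sigma x}\Sigma B$) is required. $\Sigma$ is a right semi-equivalence if it is fully faithful and its essential image is closed under extensions in right triangles. A torsion pair in $\mathcal R$ is a pair $(\mathcal U,\mathcal V)$ of additive subcategories (closed under isomorphisms, sums, summands) with $\mathcal R(\mathcal U,\mathcal V)=0$ such that each $C\in\mathcal R$ admits a right triangle $U\to C\to V\to\Sigma U$ with $U\in\mathcal U$, $V\in\mathcal V$. A morphism $f:A\to B$ is $\mathcal V$-monic if every morphism $A\to V$ with $V\in\mathcal V$ factors through $f$. *)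

From HB Require Import structures.
From mathcomp Require Import all_boot all_algebra.
Set Implicit Arguments. Unset Strict Implicit. Unset Printing Implicit Defensive.
Import GRing.Theory.
Local Open Scope ring_scope.

Record precat := Precat {
  Obj : Type;
  hom : Obj -> Obj -> zmodType;
  idm : forall A, hom A A;
  comp : forall A B C, hom B C -> hom A B -> hom A C }.
Arguments idm {p} A.
Arguments comp {p A B C}.

Section Cat.
Variable C : precat.
Local Notation Ob := (Obj C).
Local Notation Hom := (@hom C).

Definition is_zero_obj (Z : Ob) : Prop :=
  forall A : Ob, (forall f g : Hom Z A, f = g) /\ (forall f g : Hom A Z, f = g).

Definition is_biprod (A B S : Ob) (i1 : Hom A S) (i2 : Hom B S)
  (p1 : Hom S A) (p2 : Hom S B) : Prop :=
  [/\ comp p1 i1 = idm A, comp p2 i2 = idm B, comp p1 i2 = 0, comp p2 i1 = 0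
    & comp i1 p1 + comp i2 p2 = idm S].

Definition is_iso (A B : Ob) (f : Hom A B) : Prop :=
  exists g : Hom B A, comp g f = idm A /\ comp f g = idm B.

Definition isomorphic (A B : Ob) : Prop := exists f : Hom A B, is_iso f.

Definition is_additive : Prop :=
  (forall (A B D E : Ob) (h : Hom D E) (g : Hom B D) (f : Hom A B),
      comp h (comp g f) = comp (comp h g) f) /\
  (forall (A B : Ob) (f : Hom A B), comp (idm B) f = f) /\
  (forall (A B : Ob) (f : Hom A B), comp f (idm A) = f) /\
  (forall (A B D : Ob) (g g' : Hom B D) (f : Hom A B),
      comp (g + g') f = comp g f + comp g' f) /\
  (forall (A B D : Ob) (g : Hom B D) (f f' : Hom A B),
      comp g (f + f') = comp g f + comp g f') /\
  (exists Z : Ob, is_zero_obj Z) /\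
  (forall A B : Ob, exists (S : Ob) (i1 : Hom A S) (i2 : Hom B S)
      (p1 : Hom S A) (p2 : Hom S B), is_biprod i1 i2 p1 p2) /\
  (* idempotent completeness: every idempotent splits *)
  (forall (A : Ob) (e : Hom A A), comp e e = e ->
      exists (B : Ob) (r : Hom A B) (s : Hom B A),
        comp s r = e /\ comp r s = idm B).

Variable Sig : Ob -> Ob.
Variable Sigf : forall A B : Ob, Hom A B -> Hom (Sig A) (Sig B).
Variable Delta : forall A B D : Ob, Hom A B -> Hom B D -> Hom D (Sig A) -> Prop.

Definition is_additive_functor : Prop :=
  (forall A : Ob, Sigf (idm A) = idm (Sig A)) /\
  (forall (A B D : Ob) (g : Hom B D) (f : Hom A B),
      Sigf (comp g f) = comp (Sigf g) (Sigf f)) /\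
  (forall (A B : Ob) (f f' : Hom A B), Sigf (f + f') = Sigf f + Sigf f').

Definition is_right_triangulated : Prop :=
  is_additive /\ is_additive_functor /\
  (forall (A B D A' B' D' : Ob) (f : Hom A B) (g : Hom B D) (h : Hom D (Sig A))
      (f' : Hom A' B') (g' : Hom B' D') (h' : Hom D' (Sig A'))
      (a : Hom A A') (b : Hom B B') (c : Hom D D'),
      Delta f g h -> is_iso a -> is_iso b -> is_iso c ->
      comp b f = comp f' a -> comp c g = comp g' b ->
      comp (Sigf a) h = comp h' c -> Delta f' g' h') /\
  (forall (A Z : Ob), is_zero_obj Z ->
      Delta (idm A) (0 : Hom A Z) (0 : Hom Z (Sig A))) /\
  (forall (A B : Ob) (f : Hom A B),
      exists (D : Ob) (g : Hom B D) (h : Hom D (Sig A)), Delta f g h) /\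
  (forall (A B D : Ob) (f : Hom A B) (g : Hom B D) (h : Hom D (Sig A)),
      Delta f g h -> Delta g h (- Sigf f)) /\
  (forall (A B D A' B' D' : Ob) (f : Hom A B) (g : Hom B D) (h : Hom D (Sig A))
      (f' : Hom A' B') (g' : Hom B' D') (h' : Hom D' (Sig A'))
      (a : Hom A A') (b : Hom B B'),
      Delta f g h -> Delta f' g' h' -> comp b f = comp f' a ->
      exists c : Hom D D', comp c g = comp g' b /\ comp (Sigf a) h = comp h' c) /\
  (forall (A B D C' A' B' : Ob) (f : Hom A B) (u : Hom B D)
      (g : Hom B C') (h : Hom C' (Sig A))
      (v : Hom D A') (w : Hom A' (Sig B))
      (x : Hom D B') (y : Hom B' (Sig A)),
      Delta f g h -> Delta u v w -> Delta (comp u f) x y ->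
      exists (a : Hom C' B') (b : Hom B' A'),
        Delta a b (comp (Sigf g) w) /\
        comp a g = comp x u /\ comp y a = h /\ comp b x = v /\
        comp (Sigf f) y = comp w b).

Definition right_semi_equivalence : Prop :=
  (forall A B : Ob, bijective (@Sigf A B)) /\
  (forall (A B D : Ob) (f : Hom A B) (g : Hom B D) (h : Hom D (Sig A)),
      Delta f g h ->
      (exists A', isomorphic A (Sig A')) -> (exists D', isomorphic D (Sig D')) ->
      exists B', isomorphic B (Sig B')).

Definition additive_subcat (P : Ob -> Prop) : Prop :=
  (forall A B : Ob, isomorphic A B -> P A -> P B) /\
  (exists Z : Ob, is_zero_obj Z /\ P Z) /\
  (forall (A B S : Ob) (i1 : Hom A S) (i2 : Hom B S) (p1 : Hom S A) (p2 : Hom S B),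
      is_biprod i1 i2 p1 p2 -> P A -> P B -> P S) /\
  (forall (A B S : Ob) (i1 : Hom A S) (i2 : Hom B S) (p1 : Hom S A) (p2 : Hom S B),
      is_biprod i1 i2 p1 p2 -> P S -> P A /\ P B).

Definition torsion_pair (U V : Ob -> Prop) : Prop :=
  additive_subcat U /\ additive_subcat V /\
  (forall (A B : Ob) (f : Hom A B), U A -> V B -> f = 0) /\
  (forall X : Ob, exists (U0 V0 : Ob) (f : Hom U0 X) (g : Hom X V0)
      (h : Hom V0 (Sig U0)), [/\ U U0, V V0 & Delta f g h]).

Definition V_monic (V : Ob -> Prop) (A B : Ob) (f : Hom A B) : Prop :=
  forall (W : Ob) (x : Hom A W), V W -> exists y : Hom B W, comp y f = x.

End Cat.

From Pilot Require Import Defs.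
From HB Require Import structures.
From mathcomp Require Import all_boot all_algebra.
Import Defs.
Set Implicit Arguments. Unset Strict Implicit.
Import GRing.Theory.
Local Open Scope ring_scope.

(* The proof runs through condition (c), R(Sig U, V) = 0:
   - (a) -> (c) is orthogonality of U and V;  (c) -> (a) uses that U is the
     left orthogonal of V (an object killed by every map to V is a retract of
     the U-part of its truncation triangle);
   - (c) -> (b): for Sig X in V, the suspended truncation triangle of X has a
     vanishing first map, so X is a retract of its V-part;
   - (b) -> (c) and (b) -> (d): the V-part of the truncation triangle of an
     object Sig X is itself (up to isomorphism) a suspension Sig V', and by (b)
     V' lies in V; maps out of Sig X to V therefore come from maps out of X;
   - (d) -> (c): X -> 0 is V-monic for X in U, hence so is Sig X -> 0.
   The file first derives the elementary facts about right triangulated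
   categories needed for this (zero composites, exactness of Hom on right
   triangles, retract closure of additive subcategories, the semi-equivalence
   producing desuspensions), then the torsion pair facts, then the four
   implications, from which the theorem is assembled. *)

Section RightTriangulated.
Variable C : precat.
Variable Sig : Obj C -> Obj C.
Variable Sigf : forall A B : Obj C, hom A B -> hom (Sig A) (Sig B).
Variable Delta : forall A B D : Obj C, hom A B -> hom B D -> hom D (Sig A) -> Prop.
Hypothesis HRT : is_right_triangulated Sigf Delta.
Hypothesis HSE : right_semi_equivalence Sigf Delta.

Lemma compA (A B D E : Obj C) (h : hom D E) (g : hom B D) (f : hom A B) :
  comp h (comp g f) = comp (comp h g) f.
Proof. by case: HRT => [[H _] _]; apply: H. Qed.
Lemma comp1l (A B : Obj C) (f : hom A B) : comp (idm B) f = f.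
Proof. by case: HRT => [[_ [H _]] _]; apply: H. Qed.
Lemma comp1r (A B : Obj C) (f : hom A B) : comp f (idm A) = f.
Proof. by case: HRT => [[_ [_ [H _]]] _]; apply: H. Qed.
Lemma compDl (A B D : Obj C) (g g' : hom B D) (f : hom A B) :
  comp (g + g') f = comp g f + comp g' f.
Proof. by case: HRT => [[_ [_ [_ [H _]]]] _]; apply: H. Qed.
Lemma compDr (A B D : Obj C) (g : hom B D) (f f' : hom A B) :
  comp g (f + f') = comp g f + comp g f'.
Proof. by case: HRT => [[_ [_ [_ [_ [H _]]]]] _]; apply: H. Qed.
Lemma zero_obj_exists : exists Z : Obj C, is_zero_obj Z.
Proof. by case: HRT => [[_ [_ [_ [_ [_ [H _]]]]]] _]. Qed.
Lemma idempotent_splits (A : Obj C) (e : hom A A) : comp e e = e ->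
  exists (B : Obj C) (r : hom A B) (s : hom B A), comp s r = e /\ comp r s = idm B.
Proof. by case: HRT => [[_ [_ [_ [_ [_ [_ [_ H]]]]]]] _]; apply: H. Qed.

Lemma Sigf1 (A : Obj C) : Sigf (idm A) = idm (Sig A).
Proof. by case: HRT => [_ [[H _] _]]; apply: H. Qed.
Lemma SigfM (A B D : Obj C) (g : hom B D) (f : hom A B) :
  Sigf (comp g f) = comp (Sigf g) (Sigf f).
Proof. by case: HRT => [_ [[_ [H _]] _]]; apply: H. Qed.
Lemma SigfD (A B : Obj C) (f f' : hom A B) : Sigf (f + f') = Sigf f + Sigf f'.
Proof. by case: HRT => [_ [[_ [_ H]] _]]; apply: H. Qed.

Lemma tri_iso (A B D A' B' D' : Obj C)
    (f : hom A B) (g : hom B D) (h : hom D (Sig A))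
    (f' : hom A' B') (g' : hom B' D') (h' : hom D' (Sig A'))
    (a : hom A A') (b : hom B B') (c : hom D D') :
  Delta f g h -> is_iso a -> is_iso b -> is_iso c ->
  comp b f = comp f' a -> comp c g = comp g' b ->
  comp (Sigf a) h = comp h' c -> Delta f' g' h'.
Proof. by case: HRT => [_ [_ [H _]]]; apply: H. Qed.
Lemma tri_id (A Z : Obj C) : is_zero_obj Z ->
  Delta (idm A) (0 : hom A Z) (0 : hom Z (Sig A)).
Proof. by case: HRT => [_ [_ [_ [H _]]]]; apply: H. Qed.
Lemma tri_exists (A B : Obj C) (f : hom A B) :
  exists (D : Obj C) (g : hom B D) (h : hom D (Sig A)), Delta f g h.
Proof. by case: HRT => [_ [_ [_ [_ [H _]]]]]; apply: H. Qed.
Lemma tri_rot (A B D : Obj C) (f : hom A B) (g : hom B D) (h : hom D (Sig A)) :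
  Delta f g h -> Delta g h (- Sigf f).
Proof. by case: HRT => [_ [_ [_ [_ [_ [H _]]]]]]; apply: H. Qed.
Lemma tri_morph (A B D A' B' D' : Obj C)
    (f : hom A B) (g : hom B D) (h : hom D (Sig A))
    (f' : hom A' B') (g' : hom B' D') (h' : hom D' (Sig A'))
    (a : hom A A') (b : hom B B') :
  Delta f g h -> Delta f' g' h' -> comp b f = comp f' a ->
  exists c : hom D D', comp c g = comp g' b /\ comp (Sigf a) h = comp h' c.
Proof. by case: HRT => [_ [_ [_ [_ [_ [_ [H _]]]]]]]; apply: H. Qed.

Lemma comp0l (A B D : Obj C) (f : hom A B) : comp (0 : hom B D) f = 0.
Proof. by apply: (@addrI _ (comp 0 f)); rewrite -compDl !addr0. Qed.
Lemma comp0r (A B D : Obj C) (g : hom B D) : comp g (0 : hom A B) = 0.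
Proof. by apply: (@addrI _ (comp g 0)); rewrite -compDr !addr0. Qed.
Lemma compNl (A B D : Obj C) (g : hom B D) (f : hom A B) :
  comp (- g) f = - comp g f.
Proof. by apply/eqP; rewrite -addr_eq0 -compDl addNr comp0l. Qed.
Lemma compNr (A B D : Obj C) (g : hom B D) (f : hom A B) :
  comp g (- f) = - comp g f.
Proof. by apply/eqP; rewrite -addr_eq0 -compDr addNr comp0r. Qed.
Lemma Sigf0 (A B : Obj C) : Sigf (0 : hom A B) = 0.
Proof. by apply: (@addrI _ (Sigf (0 : hom A B))); rewrite -SigfD !addr0. Qed.
Lemma SigfN (A B : Obj C) (f : hom A B) : Sigf (- f) = - Sigf f.
Proof. by apply/eqP; rewrite -addr_eq0 -SigfD addNr Sigf0. Qed.

Lemma Sigf_inj (A B : Obj C) (f g : hom A B) : Sigf f = Sigf g -> f = g.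
Proof. by case: HSE => H _; apply: bij_inj. Qed.
Lemma Sigf_surj (A B : Obj C) (c : hom (Sig A) (Sig B)) :
  exists f : hom A B, Sigf f = c.
Proof. by case: HSE => H _; case: (H A B) => g _ K; exists (g c). Qed.

Lemma Sig_zero_obj (Z : Obj C) : is_zero_obj Z -> is_zero_obj (Sig Z).
Proof.
move=> HZ; have id0 : idm (Sig Z) = 0.
  by rewrite -Sigf1 (proj1 (HZ Z) (idm Z) 0) Sigf0.
move=> A; split=> f g.
  by rewrite -(comp1r f) -(comp1r g) id0 !comp0r.
by rewrite -(comp1l f) -(comp1l g) id0 !comp0l.
Qed.

(* Compare
   the rotated triangle 0 -> 0 -> Sig W with the rotation of (f, g, h) and
   desuspend the third component of the resulting morphism of triangles. *)
Lemma tri_lift (A B D W : Obj C) (f : hom A B) (g : hom B D) (h : hom D (Sig A))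
    (x : hom W B) :
  Delta f g h -> comp g x = 0 -> exists y : hom W A, comp f y = x.
Proof.
move=> T gx; have [Z HZ] := zero_obj_exists.
have T0 : Delta (0 : hom W Z) (0 : hom Z (Sig W)) (- Sigf (idm W)).
  exact/tri_rot/tri_id.
have [|c [_ Hc]] := tri_morph (a := x) (b := (0 : hom Z D)) T0 (tri_rot T).
  by rewrite comp0l gx.
have [y ey] := Sigf_surj c; exists y; apply: Sigf_inj.
move: Hc; rewrite compNr compNl Sigf1 comp1r -ey -SigfM.
by move/oppr_inj.
Qed.

(* For a zero object Z, 0 -> W -> W -> Sig Z is a right triangle: any
   triangle on 0 : Z -> W has third vertex isomorphic to W by exactness. *)
Lemma tri_from_zero (Z W : Obj C) : is_zero_obj Z ->
  Delta (0 : hom Z W) (idm W) (0 : hom W (Sig Z)).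
Proof.
move=> HZ; have [E [g [h T]]] := tri_exists (0 : hom Z W).
have SZ := Sig_zero_obj HZ.
have [y gy] : exists y : hom E W, comp g y = idm E.
  by apply: (tri_lift (tri_rot T)); exact: (proj2 (SZ E)).
have yg : comp y g = idm W.
  have [y0 Hy0] : exists y0 : hom W Z, comp (0 : hom Z W) y0 = comp y g - idm W.
    by apply: (tri_lift T); rewrite compDr compNr compA gy comp1l comp1r subrr.
  by apply/eqP; rewrite -subr_eq0 -Hy0 comp0l.
apply: (tri_iso (a := idm Z) (b := idm W) (c := y) T).
- by exists (idm Z); rewrite comp1l.
- by exists (idm W); rewrite comp1l.
- by exists g.
- by rewrite comp0r comp0l.
- by rewrite comp1l.
- exact: (proj2 (SZ E)).
Qed.

Lemma tri_extend (A B D W : Obj C) (f : hom A B) (g : hom B D) (h : hom D (Sig A))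
    (x : hom B W) :
  Delta f g h -> comp x f = 0 -> exists y : hom D W, comp y g = x.
Proof.
move=> T xf; have [Z HZ] := zero_obj_exists.
have [|c [Hc _]] := tri_morph (a := (0 : hom A Z)) (b := x) T (tri_from_zero W HZ).
  by rewrite xf comp0r.
by exists c; rewrite Hc comp1l.
Qed.

(* Additive subcategories are closed under retracts: split the complementary
   idempotent 1 - s r to exhibit S as a biproduct of Y and another object. *)
Lemma retract_closed (P : Obj C -> Prop) (Y S : Obj C) (s : hom Y S) (r : hom S Y) :
  additive_subcat P -> comp r s = idm Y -> P S -> P Y.
Proof.
move=> [_ [_ [_ Psummand]]] rs PS.
set e := idm S - comp s r.
have es : comp e s = 0 by rewrite /e compDl compNl comp1l -compA rs comp1r subrr.
have re : comp r e = 0 by rewrite /e compDr compNr comp1r compA rs comp1l subrr.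
have ee : comp e e = e by rewrite {1}/e compDl compNl comp1l -compA re comp0r subr0.
have [B [r' [s' [s'r' r's']]]] := idempotent_splits ee.
have bp : is_biprod s s' r r'.
  split => //.
  - have -> : s' = comp e s' by rewrite -s'r' -compA r's' comp1r.
    by rewrite compA re comp0l.
  - have -> : r' = comp r' e by rewrite -s'r' compA r's' comp1l.
    by rewrite -compA es comp0r.
  - by rewrite s'r' /e addrC subrK.
exact: (proj1 (Psummand _ _ _ _ _ _ _ bp PS)).
Qed.

(* Semi-equivalence: in a right triangle whose middle vertex is a suspension
   the third vertex is (isomorphic to) a suspension, since after rotation it
   sits between the suspensions Sig X and Sig U0. *)
Lemma third_vertex_desuspends (U0 X D : Obj C) (f : hom U0 (Sig X)) (g : hom (Sig X) D)
    (h : hom D (Sig U0)) :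
  Delta f g h -> exists D', isomorphic D (Sig D').
Proof.
have iso_refl (A : Obj C) : isomorphic A A.
  by exists (idm A); exists (idm A); rewrite comp1l.
move=> T; apply: (proj2 HSE _ _ _ _ _ _ (tri_rot T)).
  by exists X; apply: iso_refl.
by exists U0; apply: iso_refl.
Qed.

Variables U V : Obj C -> Prop.
Hypothesis HUV : torsion_pair Delta U V.

Lemma U_additive : additive_subcat U. Proof. by case: HUV. Qed.
Lemma V_additive : additive_subcat V. Proof. by case: HUV => _ []. Qed.
Lemma U_orth_V (A B : Obj C) (f : hom A B) : U A -> V B -> f = 0.
Proof. by case: HUV => _ [_ [H _]]; apply: H. Qed.
Lemma truncation (X : Obj C) :
  exists (U0 V0 : Obj C) (f : hom U0 X) (g : hom X V0) (h : hom V0 (Sig U0)),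
    [/\ U U0, V V0 & Delta f g h].
Proof. by case: HUV => _ [_ [_ H]]; apply: H. Qed.

(* U is the left orthogonal of V: if every map X -> V vanishes, the map
   X -> V0 of the truncation triangle does, and X is a retract of U0. *)
Lemma left_orth_in_U (X : Obj C) :
  (forall (Y : Obj C) (f : hom X Y), V Y -> f = 0) -> U X.
Proof.
move=> HX; have [U0 [V0 [f [g [h [UU0 VV0 T]]]]]] := truncation X.
have [s fs] : exists s, comp f s = idm X.
  by apply: (tri_lift T); rewrite comp1r (HX _ g VV0).
exact: retract_closed U_additive fs UU0.
Qed.

Definition Sig_stable_U := forall X : Obj C, U X -> U (Sig X).
Definition desusp_stable_V := forall X : Obj C, V (Sig X) -> V X.
Definition Sig_U_orth_V :=
  forall (X Y : Obj C) (f : hom (Sig X) Y), U X -> V Y -> f = 0.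
Definition Sig_preserves_V_monic :=
  forall (A B : Obj C) (f : hom A B), V_monic V f -> V_monic V (Sigf f).

Lemma desuspension_in_V (Hb : desusp_stable_V) (V0 : Obj C) :
  V V0 -> (exists D', isomorphic V0 (Sig D')) ->
  exists (V' : Obj C) (phi : hom V0 (Sig V')) (psi : hom (Sig V') V0),
    [/\ V V', comp psi phi = idm V0 & comp phi psi = idm (Sig V')].
Proof.
move=> VV0 [V' [phi [psi [psiphi phipsi]]]].
exists V', phi, psi; split=> //; apply: Hb.
by apply: (proj1 V_additive V0 _ _ VV0); exists phi, psi.
Qed.

Lemma a_implies_c : Sig_stable_U -> Sig_U_orth_V.
Proof. by move=> Ha X Y f UX VY; exact: U_orth_V (Ha _ UX) VY. Qed.

Lemma c_implies_a : Sig_U_orth_V -> Sig_stable_U.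
Proof. by move=> Hc X UX; apply: left_orth_in_U => Y f; exact: Hc _ _ f UX. Qed.

(* Rotating the truncation triangle of X three times gives
   Sig U0 -> Sig X -> Sig V0 with first map 0 by (c), so Sig X, hence X,
   is a retract of the V-part. *)
Lemma c_implies_b : Sig_U_orth_V -> desusp_stable_V.
Proof.
move=> Hc X VSX; have [U0 [V0 [f [g [h [UU0 VV0 T]]]]]] := truncation X.
have Sf0 : Sigf f = 0 := Hc _ _ (Sigf f) UU0 VSX.
have [y Hy] : exists y, comp y (- Sigf g) = idm (Sig X).
  by apply: (tri_extend (tri_rot (tri_rot (tri_rot T)))); rewrite comp1l Sf0 oppr0.
have [y' ey'] := Sigf_surj y.
have retr : comp (- y') g = idm X.
  by apply: Sigf_inj; rewrite compNl SigfN SigfM ey' Sigf1 -compNr Hy.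
exact: retract_closed V_additive retr VV0.
Qed.

(* In the truncation triangle U0 -> Sig X -> V0 we have V0 = Sig V' with V'
   in V, so Sig X -> V0 desuspends to X -> V' and vanishes; thus Sig X is a
   retract of U0, and maps Sig X -> V vanish. *)
Lemma b_implies_c : desusp_stable_V -> Sig_U_orth_V.
Proof.
move=> Hb X Y f UX VY.
have [U0 [V0 [f0 [g [h [UU0 VV0 T]]]]]] := truncation (Sig X).
have [V' [phi [psi [VV' psiphi _]]]] :=
  desuspension_in_V Hb VV0 (third_vertex_desuspends T).
have g0 : g = 0.
  have [g' eg'] := Sigf_surj (comp phi g).
  by rewrite -(comp1l g) -psiphi -compA -eg' (U_orth_V g' UX VV') Sigf0 comp0r.
have [s f0s] : exists s, comp f0 s = idm (Sig X).
  by apply: (tri_lift T); rewrite comp1r g0.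
by rewrite -(comp1r f) -f0s compA (U_orth_V (comp f f0) UU0 VY) comp0l.
Qed.

(* A map Sig A -> W with W in V factors through the truncation Sig A -> V0
   = Sig V'; the desuspended map A -> V' extends along the V-monic f. *)
Lemma b_implies_d : desusp_stable_V -> Sig_preserves_V_monic.
Proof.
move=> Hb A B f Hf W x VW.
have [U1 [V1 [u [v [w [UU1 VV1 T]]]]]] := truncation (Sig A).
have [z zv] : exists z, comp z v = x by apply: (tri_extend T); exact: U_orth_V.
have [V' [phi [psi [VV' psiphi _]]]] :=
  desuspension_in_V Hb VV1 (third_vertex_desuspends T).
have [v' ev'] := Sigf_surj (comp phi v).
have [y' y'f] := Hf _ v' VV'.
exists (comp z (comp psi (Sigf y'))).
by rewrite -!compA -SigfM y'f ev' (compA psi) psiphi comp1l zv.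
Qed.

(* For X in U the map X -> 0 is V-monic; so Sig X -> Sig 0 is V-monic too,
   and every map Sig X -> V factors through it. *)
Lemma d_implies_c : Sig_preserves_V_monic -> Sig_U_orth_V.
Proof.
move=> Hd X Y f UX VY; have [Z _] := zero_obj_exists.
have monic0 : V_monic V (0 : hom X Z).
  by move=> W x VW; exists 0; rewrite comp0l (U_orth_V x UX VW).
have [y <-] := Hd _ _ _ monic0 Y f VY.
by rewrite Sigf0 comp0r.
Qed.

End RightTriangulated.

Theorem mainTheorem11 (C : precat)
  (Sig : Obj C -> Obj C)
  (Sigf : forall A B : Obj C, hom A B -> hom (Sig A) (Sig B))
  (Delta : forall A B D : Obj C,
      hom A B -> hom B D -> hom D (Sig A) -> Prop)
  (HRT : is_right_triangulated Sigf Delta)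
  (HSE : right_semi_equivalence Sigf Delta)
  (U V : Obj C -> Prop)
  (HUV : torsion_pair Delta U V) :
  [<-> (* (a) Sig U \subseteq U *)
       (forall X : Obj C, U X -> U (Sig X));
       (* (b) Sig^{-1} V \subseteq V *)
       (forall X : Obj C, V (Sig X) -> V X);
       (* (c) R(Sig U, V) = 0 *)
       (forall (X Y : Obj C) (f : hom (Sig X) Y), U X -> V Y -> f = 0);
       (* (d) Sig preserves V-monic morphisms *)
       (forall (A B : Obj C) (f : hom A B),
          V_monic V f -> V_monic V (Sigf A B f))].
Proof.
have ac := a_implies_c HUV.
have cb := c_implies_b HRT HSE HUV.
have bc := b_implies_c HRT HSE HUV.
have bd := b_implies_d HRT HSE HUV.
have dc := d_implies_c HRT HUV.
have ca := c_implies_a HRT HSE HUV.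
tfae.
- by move=> /ac /cb.
- exact: bc.
- by move=> /cb /bd.
- by move=> /dc /ca.
Qed.
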